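(* Let $d\ge1$, $\varepsilon>0$ and fix $T>0$. For $t\ge T$ and $x,y\in\mathbb{R}^d_\varepsilon$ the following hold, where $A\lesssim B$ for exponents means: there exist constants $C,c>0$, independent of $(t,x,y)$ in the indicated range, with $e^{-A/t}\le Ce^{-cB/t}$... more precisely, for $F,G\ge0$, ''$e^{-F/t}\lesssim e^{-G/t}$'' means $e^{-c_1F/t}\le Ce^{-c_2G/t}$ for some constants $C,c_1,c_2>0$, and $\asymp$ means both directions: (i) if $|x|_\rho\vee|y|_\rho>1$, then $e^{-\rho(x,y)^2/t}\asymp e^{-|x-y|^2/t}\gtrsim e^{-(|x|_\rho+|y|_\rho)^2/t}$; (ii) if $|x|_\rho\vee|y|_\rho\le1$, then $e^{-\rho(x,y)^2/t}\asymp e^{-|x-y|^2/t}\asymp e^{-(|x|_\rho+|y|_\rho)^2/t}$; (iii) for any fixed $b<1$, if $|x|_\rho>1>b\ge|y|_\rho$, then $e^{-\rho(x,y)^2/t}\asymp e^{-|x-y|^2/t}\asymp e^{-(|x|_\rho+|y|_\rho)^2/t}$.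
   Context: $\mathbb{R}^d_\varepsilon=\{x\in\mathbb{R}^d:|x|>\varepsilon\}$ (for $d=1$, $(0,\infty)$). For $x\in\mathbb{R}^d_\varepsilon$, $|x|_\rho=|x|-\varepsilon$ (for $d=1$, $|x|_\rho=|x|$), and for $x,y\in\mathbb{R}^d_\varepsilon$, $\rho(x,y)=(|x|_\rho+|y|_\rho)\wedge|x-y|$, where $a\wedge b=\min\{a,b\}$, $a\vee b=\max\{a,b\}$. The implicit constants may depend on $d,\varepsilon,T$ (and on $b$ in (iii)). *)

From HB Require Import structures.
From mathcomp Require Import all_boot all_order all_algebra.
From mathcomp Require Import all_classical all_reals all_analysis.
Set Implicit Arguments. Unset Strict Implicit. Unset Printing Implicit Defensive.
Import Order.TTheory GRing.Theory Num.Theory.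
Local Open Scope ring_scope.

Section Defs.
Variable R : realType.

Definition enorm (d : nat) (x : 'rV[R]_d) : R := Num.sqrt (\sum_i (x 0 i) ^+ 2).

Definition in_dom (d : nat) (eps : R) (x : 'rV[R]_d) : Prop :=
  if d == 1%N then (forall i, 0 < x 0 i) else eps < enorm x.

Definition rnorm (d : nat) (eps : R) (x : 'rV[R]_d) : R :=
  if d == 1%N then enorm x else enorm x - eps.

Definition rho (d : nat) (eps : R) (x y : 'rV[R]_d) : R :=
  Num.min (rnorm eps x + rnorm eps y) (enorm (x - y)).

Definition exp_lesssim (d : nat) (S : R -> 'rV[R]_d -> 'rV[R]_d -> Prop)
  (F G : 'rV[R]_d -> 'rV[R]_d -> R) : Prop :=
  exists C c1 c2 : R, [/\ 0 < C, 0 < c1, 0 < c2 &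
    forall t x y, S t x y ->
      expR (- (c1 * F x y) / t) <= C * expR (- (c2 * G x y) / t)].

Definition exp_asymp (d : nat) (S : R -> 'rV[R]_d -> 'rV[R]_d -> Prop)
  (F G : 'rV[R]_d -> 'rV[R]_d -> R) : Prop :=
  exp_lesssim S F G /\ exp_lesssim S G F.

End Defs.

From HB Require Import structures.
From mathcomp Require Import all_boot all_order all_algebra.
From mathcomp Require Import all_classical all_reals all_analysis.
From mathcomp Require Import ring lra.
Import Order.TTheory GRing.Theory Num.Theory.
Local Open Scope ring_scope.

Set Implicit Arguments.
Unset Strict Implicit.

(* For t >= T an additive constant K in an exponent only costs the factor
   e^{K/T}, so each estimate reduces to a quadratic inequality
   G <= c F + K between the exponents.  All of them follow from
   rho <= |x - y| <= rho + 2 eps, from |x - y| <= |x|_rho + |y|_rho + 2 eps,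
   and, when |y|_rho <= 1, from |x|_rho + |y|_rho <= |x - y| + 2. *)

Section EuclideanNorm.
Variable R : realType.

Lemma cauchy_schwarz_sum (n : nat) (a b : 'I_n -> R) :
  (\sum_i a i * b i) ^+ 2 <= (\sum_i a i ^+ 2) * (\sum_i b i ^+ 2).
Proof.
have lagrange : \sum_i \sum_j (a i * b j - a j * b i) ^+ 2 =
    2 * ((\sum_i a i ^+ 2) * (\sum_i b i ^+ 2) - (\sum_i a i * b i) ^+ 2).
  have -> : forall A B S : R, 2 * (A * B - S ^+ 2) = A * B + B * A - 2 * (S * S).
    by move=> A B S; ring.
  rewrite !big_distrlr /= mulr_sumr -big_split -sumrB /=.
  apply: eq_bigr => i _; rewrite mulr_sumr -big_split -sumrB /=.
  by apply: eq_bigr => j _; ring.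
have : 0 <= \sum_i \sum_j (a i * b j - a j * b i) ^+ 2.
  by apply: sumr_ge0 => i _; apply: sumr_ge0 => j _; exact: sqr_ge0.
rewrite lagrange -subr_ge0; lra.
Qed.

Variable d : nat.
Implicit Types x y u v : 'rV[R]_d.

Lemma enorm_ge0 x : 0 <= enorm x.
Proof. exact: sqrtr_ge0. Qed.

Lemma enorm_sqr x : enorm x ^+ 2 = \sum_i x 0 i ^+ 2.
Proof. by rewrite sqr_sqrtr // sumr_ge0 // => i _; exact: sqr_ge0. Qed.

Lemma enormN x : enorm (- x) = enorm x.
Proof.
by rewrite /enorm; congr Num.sqrt; apply: eq_bigr => i _; rewrite mxE sqrrN.
Qed.

Lemma dot_le_enorm u v : \sum_i u 0 i * v 0 i <= enorm u * enorm v.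
Proof.
rewrite /enorm -sqrtrM ?sumr_ge0 // => [|i _]; last exact: sqr_ge0.
rewrite (le_trans (ler_norm _)) // -sqrtr_sqr ler_sqrt; first exact: cauchy_schwarz_sum.
by rewrite mulr_ge0 // sumr_ge0 // => i _; exact: sqr_ge0.
Qed.

Lemma enormD_le u v : enorm (u + v) <= enorm u + enorm v.
Proof.
rewrite -(ler_pXn2r (_ : 0 < 2)%N) ?nnegrE ?addr_ge0 ?enorm_ge0 //.
have expand : enorm (u + v) ^+ 2 =
    enorm u ^+ 2 + enorm v ^+ 2 + 2 * \sum_i u 0 i * v 0 i.
  rewrite !enorm_sqr mulr_sumr -!big_split /=.
  by apply: eq_bigr => i _; rewrite mxE; ring.
rewrite expand sqrrD -mulr_natr; have := dot_le_enorm u v; lra.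
Qed.

Lemma enormB_le x y : enorm (x - y) <= enorm x + enorm y.
Proof. by rewrite -(enormN y) enormD_le. Qed.

Lemma enorm_le_enormB x y : enorm x <= enorm (x - y) + enorm y.
Proof. by rewrite -{1}(subrK y x) enormD_le. Qed.

End EuclideanNorm.

Section RhoDistance.
Variables (R : realType) (d : nat) (eps : R).
Hypothesis eps_ge0 : 0 <= eps.
Implicit Types x y : 'rV[R]_d.

Lemma rnorm_ge0 x : in_dom eps x -> 0 <= rnorm eps x.
Proof.
rewrite /in_dom /rnorm; case: (d == 1%N) => [_|/ltW]; first exact: enorm_ge0.
by rewrite subr_ge0.
Qed.

Lemma enorm_le_rnorm x : enorm x <= rnorm eps x + eps.
Proof. by rewrite /rnorm; case: (d == 1%N); have := eps_ge0; lra. Qed.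

Lemma rnorm_le_enormB x y : rnorm eps x <= enorm (x - y) + rnorm eps y.
Proof. by have := enorm_le_enormB x y; rewrite /rnorm; case: (d == 1%N); lra. Qed.

Lemma enormB_le_rnormD x y :
  enorm (x - y) <= rnorm eps x + rnorm eps y + 2 * eps.
Proof.
by have := enormB_le x y; have := enorm_le_rnorm x; have := enorm_le_rnorm y; lra.
Qed.

Lemma rho_ge0 x y : in_dom eps x -> in_dom eps y -> 0 <= rho eps x y.
Proof.
by move=> /rnorm_ge0 hx /rnorm_ge0 hy; rewrite le_min addr_ge0 ?enorm_ge0.
Qed.

Lemma rho_le_enormB x y : rho eps x y <= enorm (x - y).
Proof. by rewrite ge_min lexx orbT. Qed.

Lemma enormB_le_rho x y : enorm (x - y) <= rho eps x y + 2 * eps.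
Proof.
rewrite -lerBlDr le_min; apply/andP; split; last by have := eps_ge0; lra.
by rewrite lerBlDr enormB_le_rnormD.
Qed.

End RhoDistance.

Lemma sqr_le_2sqrD (R : realDomainType) (a b c : R) :
  0 <= a -> a <= b + c -> a ^+ 2 <= 2 * b ^+ 2 + 2 * c ^+ 2.
Proof. by move=> a_ge0 a_le; have := sqr_ge0 (b - c); nra. Qed.

Section ExpLesssim.
Variables (R : realType) (d : nat) (T : R).
Hypothesis T_gt0 : 0 < T.
Variable S : R -> 'rV[R]_d -> 'rV[R]_d -> Prop.
Hypothesis S_ge : forall t x y, S t x y -> T <= t.
Implicit Types F G : 'rV[R]_d -> 'rV[R]_d -> R.

Lemma exp_lesssim_le F G (c K : R) : 0 < c -> 0 <= K ->
  (forall t x y, S t x y -> G x y <= c * F x y + K) -> exp_lesssim S F G.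
Proof.
move=> c_gt0 K_ge0 GF; exists (expR (K / T)), c, 1; split; rewrite ?expR_gt0 //.
move=> t x y Stxy; have t_gt0 : 0 < t := lt_le_trans T_gt0 (S_ge Stxy).
rewrite -expRD ler_expR mul1r !mulNr.
have GF_t : G x y / t - c * F x y / t <= K / t.
  by rewrite -mulrBl ler_pM2r ?invr_gt0 //; have := GF _ _ _ Stxy; lra.
have KtT : K / t <= K / T by rewrite ler_wpM2l // lef_pV2 ?posrE ?(S_ge Stxy).
lra.
Qed.

Lemma exp_lesssim_le_sqr F G (K : R) : 0 <= K ->
  (forall t x y, S t x y -> 0 <= G x y /\ G x y <= F x y + K) ->
  exp_lesssim S (fun x y => F x y ^+ 2) (fun x y => G x y ^+ 2).
Proof.
move=> K_ge0 GF.
apply: (exp_lesssim_le (c := 2) (K := 2 * K ^+ 2)) => // [|t x y /GF[? ?]].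
  by rewrite mulr_ge0 // sqr_ge0.
exact: sqr_le_2sqrD.
Qed.

End ExpLesssim.

Section Estimates.
Variables (R : realType) (d : nat) (eps T : R).
Hypotheses (eps_ge0 : 0 <= eps) (T_gt0 : 0 < T).
Variable S : R -> 'rV[R]_d -> 'rV[R]_d -> Prop.
Hypothesis S_dom :
  forall t x y, S t x y -> [/\ T <= t, in_dom eps x & in_dom eps y].

Let S_ge t x y : S t x y -> T <= t.
Proof. by case/S_dom. Qed.

Lemma exp_asymp_rho_enormB :
  exp_asymp S (fun x y => rho eps x y ^+ 2) (fun x y => enorm (x - y) ^+ 2).
Proof.
split.
- apply: (exp_lesssim_le_sqr T_gt0 S_ge (K := 2 * eps)) => [|t x y _].
    by rewrite mulr_ge0.
  by rewrite enorm_ge0 enormB_le_rho.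
- apply: (exp_lesssim_le_sqr T_gt0 S_ge (K := 0)) => // t x y /S_dom[_ hx hy].
  by rewrite rho_ge0 // addr0 rho_le_enormB.
Qed.

Lemma exp_lesssim_rnormD_enormB :
  exp_lesssim S (fun x y => (rnorm eps x + rnorm eps y) ^+ 2)
                (fun x y => enorm (x - y) ^+ 2).
Proof.
apply: (exp_lesssim_le_sqr T_gt0 S_ge (K := 2 * eps)) => [|t x y _].
  by rewrite mulr_ge0.
by rewrite enorm_ge0 enormB_le_rnormD.
Qed.

Lemma exp_lesssim_enormB_rnormD :
  (forall t x y, S t x y -> rnorm eps y <= 1) ->
  exp_lesssim S (fun x y => enorm (x - y) ^+ 2)
                (fun x y => (rnorm eps x + rnorm eps y) ^+ 2).
Proof.
move=> y_le1; apply: (exp_lesssim_le_sqr T_gt0 S_ge (K := 2)) => // t x y Stxy.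
have [_ /rnorm_ge0 hx /rnorm_ge0 hy] := S_dom Stxy.
split; first exact: addr_ge0.
by have := rnorm_le_enormB eps x y; have := y_le1 _ _ _ Stxy; lra.
Qed.

End Estimates.

Theorem lemma2p10 (R : realType) (d : nat) (eps T : R) :
  (1 <= d)%N -> 0 < eps -> 0 < T ->
  (* (i) *)
  (let S := fun (t : R) (x y : 'rV[R]_d) =>
       [/\ T <= t, in_dom eps x, in_dom eps y &
           1 < Num.max (rnorm eps x) (rnorm eps y)] in
   exp_asymp S (fun x y => rho eps x y ^+ 2) (fun x y => enorm (x - y) ^+ 2) /\
   exp_lesssim S (fun x y => (rnorm eps x + rnorm eps y) ^+ 2)
                 (fun x y => enorm (x - y) ^+ 2)) /\
  (* (ii) *)
  (let S := fun (t : R) (x y : 'rV[R]_d) =>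
       [/\ T <= t, in_dom eps x, in_dom eps y &
           Num.max (rnorm eps x) (rnorm eps y) <= 1] in
   exp_asymp S (fun x y => rho eps x y ^+ 2) (fun x y => enorm (x - y) ^+ 2) /\
   exp_asymp S (fun x y => enorm (x - y) ^+ 2)
               (fun x y => (rnorm eps x + rnorm eps y) ^+ 2)) /\
  (* (iii) *)
  (forall b : R, b < 1 ->
   let S := fun (t : R) (x y : 'rV[R]_d) =>
       [/\ T <= t, in_dom eps x, in_dom eps y, 1 < rnorm eps x &
           rnorm eps y <= b] in
   exp_asymp S (fun x y => rho eps x y ^+ 2) (fun x y => enorm (x - y) ^+ 2) /\
   exp_asymp S (fun x y => enorm (x - y) ^+ 2)
               (fun x y => (rnorm eps x + rnorm eps y) ^+ 2)).
Proof.
move=> _ /ltW eps_ge0 T_gt0.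
have asymp_rho S := exp_asymp_rho_enormB eps_ge0 T_gt0 (S := S).
have rnormD_enormB S := exp_lesssim_rnormD_enormB eps_ge0 T_gt0 (S := S).
have enormB_rnormD S := exp_lesssim_enormB_rnormD T_gt0 (S := S).
split; [|split].
- by move=> S; split; [apply: asymp_rho | apply: rnormD_enormB] => t x y [].
- move=> S; split; first by apply: asymp_rho => t x y [].
  split; last by apply: rnormD_enormB => t x y [].
  by apply: enormB_rnormD => [t x y []|t x y [_ _ _]] //; rewrite ge_max => /andP[].
- move=> b b_lt1 S; split; first by apply: asymp_rho => t x y [].
  split; last by apply: rnormD_enormB => t x y [].
  apply: enormB_rnormD => [t x y []|t x y [_ _ _ _ y_le_b]] //.
  by rewrite (le_trans y_le_b) ?ltW.
Qed.
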